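(* Let $\mathcal H$ be the set of pairs $(g,h)$ of Markov policies $g,h:\mathcal X\to\{0,1\}$ with $N^{(g)}(x)\ge N^{(h)}(x)$ for all $x$. Consider (C1): for every $(g,h)\in\mathcal H$ and all $x,z\in\mathcal X$, $\sum_{y}\{[\beta P_{zy}(1)-P_{xy}(1)]^+N^{(g)}(y)-[P_{xy}(1)-\beta P_{zy}(1)]^+N^{(h)}(y)\}\le(1-\beta)^2/\beta$; (C2): for every $(g,h)\in\mathcal H$ and all $x\in\mathcal X$, $\sum_{y}\{[P_{xy}(0)-P_{xy}(1)]^+N^{(g)}(y)-[P_{xy}(1)-P_{xy}(0)]^+N^{(h)}(y)\}\le(1-\beta)/\beta$. Then each of the following implies (C1): (a) $\max_{x,z\in\mathcal X}\sum_{y\in\mathcal X}[\beta P_{zy}(1)-P_{xy}(1)]^+\le(1-\beta)^2/\beta$; (b) $P_{xy}(1)=P_{zy}(1)$ for all $x,y,z\in\mathcal X$. And each of the following implies (C2): (c) $\max_{x\in\mathcal X}\sum_{y\in\mathcal X}[P_{xy}(0)-P_{xy}(1)]^+\le(1-\beta)/\beta$; (d) $\beta\le 0.5$.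
   Context: A restless bandit consists of a finite or countable state space $\mathcal X$, actions $\{0,1\}$, transition matrices $P(0),P(1)$ on $\mathcal X$ ($P_{xy}(a)$ = probability of moving from $x$ to $y$ under action $a$), and a cost function; $\beta\in(0,1)$ is a discount factor. $[u]^+=\max\{u,0\}$. For a Markov policy $g:\mathcal X\to\{0,1\}$ (with $X_{t+1}$ drawn from $P_{X_t\,\cdot}(g(X_t))$), $N^{(g)}(x)=(1-\beta)\mathbb E[\sum_{t\ge0}\beta^t g(X_t)\mid X_0=x]$. *)

From HB Require Import structures.
From mathcomp Require Import all_boot all_order all_algebra.
From mathcomp Require Import all_classical all_reals all_analysis.
Set Implicit Arguments. Unset Strict Implicit. Unset Printing Implicit Defensive.
Import Order.TTheory GRing.Theory Num.Theory.
Local Open Scope classical_set_scope.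
Local Open Scope ring_scope.

(* Actions {0,1} are encoded as bool: [false] = action 0, [true] = action 1.
   P a x y = P_{xy}(a).  A Markov policy is g : X -> bool. *)

Definition stochastic (R : realType) (X : countType) (Pa : X -> X -> R) :=
  (forall x y, 0 <= Pa x y) /\
  (forall x, (\esum_(y in [set: X]) (Pa x y)%:E = 1)%E).

(* t-step transition probabilities of the chain X_{t+1} ~ P_{X_t .}(g X_t):
   tdist P g t x y = Pr(X_t = y | X_0 = x). *)
Fixpoint tdist (R : realType) (X : countType) (P : bool -> X -> X -> R)
    (g : X -> bool) (t : nat) (x y : X) : \bar R :=
  match t with
  | 0 => ((x == y)%:R)%:E
  | t'.+1 => (\esum_(z in [set: X]) (tdist P g t' x z * (P (g z) z y)%:E))%E
  end.

(* N^{(g)}(x) = (1-beta) E[ sum_t beta^t g(X_t) | X_0 = x ]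
             = (1-beta) sum_t beta^t sum_y Pr(X_t = y) g(y). *)
Definition Nvisit (R : realType) (X : countType) (P : bool -> X -> X -> R)
    (beta : R) (g : X -> bool) (x : X) : \bar R :=
  ((1 - beta)%:E *
    \sum_(0 <= t <oo) ((beta ^+ t)%:E *
        \esum_(y in [set: X]) (tdist P g t x y * ((g y)%:R)%:E)))%E.

Definition posp (R : realType) (u : R) : R := Num.max u 0.

(* The (absolutely convergent) sum of
   differences is written as the difference of the two nonnegative sums. *)
Definition C1 (R : realType) (X : countType) (P : bool -> X -> X -> R) (beta : R) :=
  forall g h : X -> bool, (forall x, Nvisit P beta h x <= Nvisit P beta g x)%E ->
  forall x z : X,
    (\esum_(y in [set: X]) ((posp (beta * P true z y - P true x y))%:E * Nvisit P beta g y)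
     - \esum_(y in [set: X]) ((posp (P true x y - beta * P true z y))%:E * Nvisit P beta h y)
     <= ((1 - beta) ^+ 2 / beta)%:E)%E.

Definition C2 (R : realType) (X : countType) (P : bool -> X -> X -> R) (beta : R) :=
  forall g h : X -> bool, (forall x, Nvisit P beta h x <= Nvisit P beta g x)%E ->
  forall x : X,
    (\esum_(y in [set: X]) ((posp (P false x y - P true x y))%:E * Nvisit P beta g y)
     - \esum_(y in [set: X]) ((posp (P true x y - P false x y))%:E * Nvisit P beta h y)
     <= ((1 - beta) / beta)%:E)%E.

From HB Require Import structures.
From mathcomp Require Import all_boot all_order all_algebra.
From mathcomp Require Import all_classical all_reals all_analysis.
From mathcomp Require Import lra.
Set Implicit Arguments. Unset Strict Implicit. Unset Printing Implicit Defensive.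
Import Order.TTheory GRing.Theory Num.Theory.
Local Open Scope classical_set_scope.
Local Open Scope ring_scope.

(* N^(g) takes values in [0, 1]: the t-step distributions have mass at most 1
   and (1 - beta) sum_t beta^t = 1.  Hence in (C1) and (C2) the subtracted sum
   is nonnegative and N^(g) can be bounded by 1, so both conditions follow from
   the bounds (a) and (c) on the sums of positive parts.  Under (b) these
   positive parts are [(beta - 1) P_zy(1)]^+ = 0, and under (d) the sum in (c)
   is at most sum_y P_xy(0) = 1 <= (1 - beta) / beta. *)

Section Posp.
Variable R : realType.
Implicit Types u v : R.

Lemma posp_ge0 u : 0 <= posp u.
Proof. by rewrite /posp le_max lexx orbT. Qed.

Lemma posp_le u v : u <= v -> 0 <= v -> posp u <= v.
Proof. by move=> uv v0; rewrite /posp ge_max uv v0. Qed.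

Lemma ler0_posp u : u <= 0 -> posp u = 0.
Proof. by move=> u0; apply/le_anti; rewrite posp_ge0 posp_le. Qed.

End Posp.

Lemma esum_weightedB_le (R : realType) (X : countType) (f q : X -> R)
    (Ng Nh : X -> \bar R) :
  (forall y, 0 <= f y) -> (forall y, 0 <= q y) ->
  (forall y, Ng y <= 1)%E -> (forall y, 0 <= Nh y)%E ->
  (\esum_(y in [set: X]) ((f y)%:E * Ng y) - \esum_(y in [set: X]) ((q y)%:E * Nh y)
     <= \esum_(y in [set: X]) (f y)%:E)%E.
Proof.
move=> f0 q0 Ng1 Nh0.
have qNh0 : (0 <= \esum_(y in [set: X]) ((q y)%:E * Nh y))%E.
  by apply: esum_ge0 => y _; apply: mule_ge0; rewrite ?lee_fin.
apply: le_trans (leeB (lexx _) qNh0) _; rewrite sube0.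
by apply: le_esum => y _; rewrite -[leRHS]mule1 lee_wpmul2l ?lee_fin.
Qed.

Lemma nneseries_geometric_le (R : realType) (beta : R) (a : nat -> \bar R) :
  0 < beta < 1 -> (forall t, 0 <= a t <= 1)%E ->
  (\sum_(0 <= t <oo) ((beta ^+ t)%:E * a t) <= ((1 - beta)^-1)%:E)%E.
Proof.
case/andP=> b0 b1 a01.
apply: lime_le.
  apply: is_cvg_ereal_nneg_natsum => t _.
  by rewrite mule_ge0 ?lee_fin ?exprn_ge0 ?(ltW b0)//; case/andP: (a01 t).
apply: nearW => n; apply: (@le_trans _ _ (\sum_(0 <= t < n) (beta ^+ t)%:E)%E).
  apply: lee_sum => t _; rewrite -[leRHS]mule1 lee_wpmul2l ?lee_fin ?exprn_ge0 ?(ltW b0)//.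
  by case/andP: (a01 t).
rewrite sumEFin lee_fin -[leRHS]mul1r.
have -> : \sum_(0 <= t < n) beta ^+ t = series (geometric 1 beta) n.
  by rewrite /series/=; apply: eq_bigr => t _; rewrite /geometric/= mul1r.
by apply: geometric_le_lim; rewrite ?ger0_norm ?ltW.
Qed.

Section Visits.
Variables (R : realType) (X : countType) (P : bool -> X -> X -> R).
Hypothesis P_ge0 : forall a x y, 0 <= P a x y.
Hypothesis esumP_le1 : forall a x, (\esum_(y in [set: X]) (P a x y)%:E <= 1)%E.

Lemma tdist_ge0 g t x y : (0 <= tdist P g t x y)%E.
Proof.
elim: t x y => [|t IH] x y /=; first by rewrite lee_fin ler0n.
by apply: esum_ge0 => z _; apply: mule_ge0; rewrite ?lee_fin.
Qed.

Lemma esum_tdist_le1 g t x : (\esum_(y in [set: X]) tdist P g t x y <= 1)%E.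
Proof.
elim: t x => [|t IH] x /=.
  rewrite (esumID [set x]); last by move=> y _; rewrite lee_fin ler0n.
  rewrite !setTI esum_set1 ?lee_fin ?ler0n// eqxx esum1 ?adde0// => y /eqP.
  by rewrite eq_sym => /negbTE ->.
apply: ge_ereal_sup => _ [A [finA _] <-].
rewrite fsbig_finite//= -esum_sum; last first.
  by move=> y z _ _; apply: mule_ge0; rewrite ?lee_fin ?tdist_ge0.
apply: le_trans (IH x); apply: le_esum => z _.
rewrite -ge0_sume_distrr; last by move=> y _; rewrite lee_fin.
rewrite -[leRHS]mule1 lee_wpmul2l ?tdist_ge0// -fsbig_finite//.
by apply: le_trans (esumP_le1 (g z) z); apply: esum_ge; exists A.
Qed.

Lemma esum_tdist_weight_ge0_le1 g t x (w : X -> R) :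
  (forall y, 0 <= w y <= 1) ->
  (0 <= \esum_(y in [set: X]) (tdist P g t x y * (w y)%:E) <= 1)%E.
Proof.
move=> w01; apply/andP; split.
  by apply: esum_ge0 => y _; rewrite mule_ge0 ?tdist_ge0 ?lee_fin//; case/andP: (w01 y).
apply: le_trans (esum_tdist_le1 g t x); apply: le_esum => y _.
by rewrite -[leRHS]mule1 lee_wpmul2l ?tdist_ge0// lee_fin; case/andP: (w01 y).
Qed.

Variable beta : R.
Hypothesis beta_bounds : 0 < beta < 1.

Let indicator_ge0_le1 (g : X -> bool) y : 0 <= ((g y)%:R : R) <= 1.
Proof. by case: (g y); rewrite lexx ler01. Qed.

Lemma Nvisit_ge0 g x : (0 <= Nvisit P beta g x)%E.
Proof.
case/andP: beta_bounds => b0 b1.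
apply: mule_ge0; first by rewrite lee_fin subr_ge0 ltW.
apply: nneseries_ge0 => t _ _; rewrite mule_ge0 ?lee_fin ?exprn_ge0 ?(ltW b0)//.
by case/andP: (esum_tdist_weight_ge0_le1 g t x (indicator_ge0_le1 g)).
Qed.

Lemma Nvisit_le1 g x : (Nvisit P beta g x <= 1)%E.
Proof.
have /andP[_ b1] := beta_bounds; have b1' : 0 < 1 - beta by rewrite subr_gt0.
rewrite /Nvisit; apply: le_trans (lee_wpmul2l _ (nneseries_geometric_le beta_bounds _)) _.
- by rewrite lee_fin ltW.
- by move=> t; apply: esum_tdist_weight_ge0_le1; apply: indicator_ge0_le1.
by rewrite -EFinM divff ?gt_eqF.
Qed.

Lemma C1_of_esum_posp_le :
  (forall x z : X,
      (\esum_(y in [set: X]) (posp (beta * P true z y - P true x y))%:E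
        <= ((1 - beta) ^+ 2 / beta)%:E)%E) -> C1 P beta.
Proof.
move=> bound g h _ x z; apply: le_trans (bound x z).
by apply: esum_weightedB_le => y; rewrite ?posp_ge0 ?Nvisit_le1 ?Nvisit_ge0.
Qed.

Lemma C2_of_esum_posp_le :
  (forall x : X,
      (\esum_(y in [set: X]) (posp (P false x y - P true x y))%:E
        <= ((1 - beta) / beta)%:E)%E) -> C2 P beta.
Proof.
move=> bound g h _ x; apply: le_trans (bound x).
by apply: esum_weightedB_le => y; rewrite ?posp_ge0 ?Nvisit_le1 ?Nvisit_ge0.
Qed.

Lemma C1_of_constant_rows :
  (forall x y z : X, P true x y = P true z y) -> C1 P beta.
Proof.
have /andP[b0 b1] := beta_bounds.
move=> rows_eq; apply: C1_of_esum_posp_le => x z.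
rewrite esum1; last first.
  move=> y _; rewrite (rows_eq x y z) ler0_posp// -{2}(mul1r (P true z y)) -mulrBl.
  by rewrite mulr_le0_ge0 ?P_ge0// subr_le0 ltW.
by rewrite lee_fin divr_ge0 ?exprn_ge0 ?subr_ge0 ?ltW.
Qed.

Lemma C2_of_beta_le_half : beta <= 1 / 2 -> C2 P beta.
Proof.
have /andP[b0 _] := beta_bounds.
move=> b_half; apply: C2_of_esum_posp_le => x.
apply: le_trans (le_trans _ (esumP_le1 false x)) _.
  by apply: le_esum => y _; rewrite lee_fin posp_le// lerBlDr lerDl.
by rewrite lee_fin ler_pdivlMr// mul1r; lra.
Qed.

End Visits.

Theorem proposition2 (R : realType) (X : countType) (P : bool -> X -> X -> R)
    (beta : R) :
  0 < beta < 1 ->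
  stochastic (P false) -> stochastic (P true) ->
  (* (a) => (C1) *)
  ((forall x z : X,
      (\esum_(y in [set: X]) (posp (beta * P true z y - P true x y))%:E
        <= ((1 - beta) ^+ 2 / beta)%:E)%E) -> C1 P beta) /\
  (* (b) => (C1) *)
  ((forall x y z : X, P true x y = P true z y) -> C1 P beta) /\
  (* (c) => (C2) *)
  ((forall x : X,
      (\esum_(y in [set: X]) (posp (P false x y - P true x y))%:E
        <= ((1 - beta) / beta)%:E)%E) -> C2 P beta) /\
  (* (d) => (C2) *)
  (beta <= 1 / 2 -> C2 P beta).
Proof.
move=> beta_bounds [P0_ge0 P0_sum] [P1_ge0 P1_sum].
have P_ge0 a x y : 0 <= P a x y by case: a.
have esumP_le1 a x : (\esum_(y in [set: X]) (P a x y)%:E <= 1)%E.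
  by case: a; rewrite ?P0_sum ?P1_sum.
split; first exact: C1_of_esum_posp_le.
split; first exact: C1_of_constant_rows.
split; first exact: C2_of_esum_posp_le.
exact: C2_of_beta_le_half.
Qed.
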